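(* Let $p$ be a prime and $n, k$ positive integers, $d = \gcd(n,k)$. Let $L(X) = \sum_{i=0}^t \alpha_i X^{p^i}$, $\alpha_i \in \mathbb{F}_p$, be a $p$-linearized polynomial without multiple roots, and let $L'$ be a $p$-linearized polynomial over $\mathbb{F}_p$ with $X - X^{p^k} = L \circ L'(X)$. Let $l'$ be the conventional $p$-associate of $L'$, let $w = (l', t_d^k)$, $u = l'/w$, and let $U$ be the linearized $p$-associate of $u$. Then $$\ker(L) \cap \mathbb{F}_{p^n} = U(\mathbb{F}_{p^d}).$$
   Context: For positive integers $d \mid k$, $t_d^k(X) = \sum_{i=0}^{k/d-1} X^{di} \in \mathbb{F}_p[X]$. For $l(X) = \sum \alpha_i X^i \in \mathbb{F}_p[X]$, its linearized $p$-associate is $\sum \alpha_i X^{p^i}$, and conversely $l$ is the conventional $p$-associate of that linearized polynomial. $(f,g)$ denotes the monic gcd in $\mathbb{F}_p[X]$. $\ker(L)$ is the set of roots of $L$ in an algebraic closure of $\mathbb{F}_p$; $U(\mathbb{F}_{p^d}) = \{U(x): x \in \mathbb{F}_{p^d}\}$. *)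

From mathcomp Require Import all_boot all_algebra all_field.
Set Implicit Arguments. Unset Strict Implicit. Unset Printing Implicit Defensive.
Import GRing.Theory.
Local Open Scope ring_scope.

Definition Fp_to (p : nat) (E : nzRingType) (a : 'F_p) : E := (nat_of_ord a)%:R.

Definition lin_poly (p : nat) (R : nzRingType) (l : {poly R}) : {poly R} :=
  \sum_(i < size l) l`_i *: 'X^(p ^ i).

Definition lin_eval (p : nat) (E : nzRingType) (l : {poly 'F_p}) (x : E) : E :=
  \sum_(i < size l) Fp_to E l`_i * x ^+ (p ^ i).

Definition tpoly (R : nzRingType) (d k : nat) : {poly R} :=
  \sum_(i < k %/ d) 'X^(d * i).

Definition gcd_monic (R : fieldType) (f g : {poly R}) : {poly R} :=
  (lead_coef (gcdp f g))^-1 *: gcdp f g.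

(* Evaluating linearized associates turns products in F_p[X] into compositions,
   so the hypothesis says l l' = 1 - X^k = -t (X^d - 1) with t = t_d^k.  Writing
   l' = u w and t = t' w with u, t' coprime, we get l u = -t' (X^d - 1): hence L o U
   kills F_(p^d), which U maps into F_(p^n) because d | n.  Conversely, a root y of
   L is fixed by the p^k-th power map, hence by the p^d-th one when y is in F_(p^n).
   A Bezout relation a u + b t' = 1 gives X^d - 1 = (a (X^d - 1) - b l) u, so every
   preimage of y under the surjective U (here E is algebraically closed and u <> 0)
   lies in F_(p^d). *)

From mathcomp Require Import all_boot all_algebra all_field.
Set Implicit Arguments. Unset Strict Implicit. Unset Printing Implicit Defensive.
Import GRing.Theory.
Local Open Scope ring_scope.

Section FpEmbedding.
Variables (p : nat) (R : nzRingType).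
Hypothesis charR : p \in [pchar R].
Let p_prime : prime p := pcharf_prime charR.

Lemma Fp_to_natr m : Fp_to R (m%:R : 'F_p) = m%:R.
Proof. rewrite /Fp_to val_Fp_nat //; exact: GRing.natr_mod_pchar. Qed.

Lemma Fp_to1 : Fp_to R (1 : 'F_p) = 1.
Proof. exact: (Fp_to_natr 1). Qed.

Lemma Fp_toD (a b : 'F_p) : Fp_to R (a + b) = Fp_to R a + Fp_to R b.
Proof. by rewrite -[a]natr_Zp -[b]natr_Zp -natrD !Fp_to_natr natrD. Qed.

Lemma Fp_toM (a b : 'F_p) : Fp_to R (a * b) = Fp_to R a * Fp_to R b.
Proof. by rewrite -[a]natr_Zp -[b]natr_Zp -natrM !Fp_to_natr natrM. Qed.

Lemma Fp_to_eq0 (a : 'F_p) : (Fp_to R a == 0) = (a == 0).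
Proof.
have a_lt_p : (val a < p)%N by case: a => /= m; rewrite Fp_cast.
by rewrite /Fp_to -(dvdn_pcharf charR) /dvdn modn_small.
Qed.

End FpEmbedding.

Section LinEval.
Variables (p : nat) (R : comNzRingType).
Hypothesis charR : p \in [pchar R].
Local Notation LE := (@lin_eval p R).

Lemma lin_evalE (f : {poly 'F_p}) x m : (size f <= m)%N ->
  LE f x = \sum_(i < m) Fp_to R f`_i * x ^+ (p ^ i).
Proof.
move=> le_f_m; rewrite /lin_eval (big_ord_widen _ (fun i => Fp_to R f`_i * x ^+ (p ^ i)) le_f_m).
rewrite big_mkcond; apply: eq_bigr => i _; case: ltnP => // le_f_i.
by rewrite nth_default // mul0r.
Qed.

Lemma lin_eval0 x : LE 0 x = 0.
Proof. by rewrite /lin_eval size_poly0 big_ord0. Qed.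

Lemma lin_evalD f g x : LE (f + g) x = LE f x + LE g x.
Proof.
set m := maxn (size f) (size g).
rewrite (lin_evalE x (size_polyD f g)) (@lin_evalE f x m) ?leq_maxl //.
rewrite (@lin_evalE g x m) ?leq_maxr // -big_split; apply: eq_bigr => i _.
by rewrite coefD (Fp_toD charR) mulrDl.
Qed.

Lemma lin_evalN f x : LE (- f) x = - LE f x.
Proof. by apply/eqP; rewrite -subr_eq0 opprK -lin_evalD addNr lin_eval0. Qed.

Lemma lin_evalB f g x : LE (f - g) x = LE f x - LE g x.
Proof. by rewrite lin_evalD lin_evalN. Qed.

Lemma lin_eval_sum (I : Type) (r : seq I) (P : pred I) (F : I -> {poly 'F_p}) x :
  LE (\sum_(i <- r | P i) F i) x = \sum_(i <- r | P i) LE (F i) x.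
Proof. exact: (big_morph (LE^~ x) (fun f g => lin_evalD f g x) (lin_eval0 x)). Qed.

Lemma lin_evalZ c f x : LE (c *: f) x = Fp_to R c * LE f x.
Proof.
rewrite (lin_evalE x (size_scale_leq c f)) /lin_eval mulr_sumr.
by apply: eq_bigr => i _; rewrite coefZ (Fp_toM charR) mulrA.
Qed.

Lemma lin_evalXn j x : LE 'X^j x = x ^+ (p ^ j).
Proof.
rewrite /lin_eval size_polyXn big_ord_recr /= coefXn eqxx (Fp_to1 charR) mul1r.
by rewrite big1 ?add0r // => i _; rewrite coefXn (ltn_eqF (ltn_ord i)) mul0r.
Qed.

Lemma lin_eval1 x : LE 1 x = x.
Proof. by rewrite -(expr0 'X) lin_evalXn expn0 expr1. Qed.

Lemma lin_eval_Xn_sub1 j x : LE ('X^j - 1) x = x ^+ (p ^ j) - x.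
Proof. by rewrite lin_evalB lin_evalXn lin_eval1. Qed.

Lemma lin_evalx0 f : LE f 0 = 0.
Proof.
have p_gt0 := prime_gt0 (pcharf_prime charR).
by rewrite /lin_eval big1 // => i _; rewrite expr0n expn_eq0 eqn0Ngt p_gt0 mulr0.
Qed.

Lemma lin_eval_frob f x j : LE f (x ^+ (p ^ j)) = LE f x ^+ (p ^ j).
Proof.
elim: j => [|j IHj]; first by rewrite !expr1.
rewrite expnSr !exprM -IHj -!(pFrobenius_autE charR) /lin_eval rmorph_sum.
apply: eq_bigr => i _; rewrite rmorphM /= /Fp_to pFrobenius_aut_nat !pFrobenius_autE.
by rewrite -!exprM (mulnC p) mulnA.
Qed.

Lemma lin_eval_mulXn f j x : LE (f * 'X^j) x = LE f (x ^+ (p ^ j)).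
Proof.
have le_fXj : (size (f * 'X^j)%R <= j + size f)%N.
  have [->|f0] := eqVneq f 0; first by rewrite mul0r size_poly0.
  by rewrite size_mulXn.
rewrite (lin_evalE x le_fXj) big_split_ord /= big1 ?add0r; last first.
  by move=> i _; rewrite coefMXn /= ltn_ord mul0r.
apply: eq_bigr => i _.
by rewrite coefMXn /= ltnNge leq_addr /= addKn expnD exprM -!exprM mulnC.
Qed.

Lemma lin_eval_mul f g x : LE (f * g) x = LE f (LE g x).
Proof.
set y := LE g x; rewrite -{1}[f]coefK poly_def mulr_suml lin_eval_sum [RHS]/lin_eval.
apply: eq_bigr => i _.
by rewrite -scalerAl lin_evalZ (mulrC _ g) lin_eval_mulXn lin_eval_frob.
Qed.

Lemma lin_eval_horner u x : LE u x = (lin_poly p (map_poly (Fp_to R) u)).[x].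
Proof.
have [->|u0] := eqVneq u 0.
  by rewrite lin_eval0 map_poly0 /lin_poly size_poly0 big_ord0 horner0.
rewrite /lin_poly size_map_poly_id0 ?(Fp_to_eq0 charR) ?lead_coef_eq0 // horner_sum.
by apply: eq_bigr => i _; rewrite hornerZ hornerXn coef_map_id0.
Qed.

Lemma lin_eval_root_fix f g k x : f * g = 1 - 'X^k -> LE g x = 0 -> x ^+ (p ^ k) = x.
Proof.
move=> fg_eq gx0; have := lin_eval_mul f g x.
rewrite fg_eq gx0 lin_evalx0 lin_evalB lin_eval1 lin_evalXn.
by move=> /subr0_eq /esym.
Qed.

Lemma lin_eval_dvdp_Xn_sub1 f j x : 'X^j - 1 %| f -> x ^+ (p ^ j) = x -> LE f x = 0.
Proof.
by move=> /dvdpP[q ->] x_fix; rewrite lin_eval_mul lin_eval_Xn_sub1 x_fix subrr lin_evalx0.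
Qed.

End LinEval.

Section LinPoly.
Variables (p : nat) (R : nzRingType).
Hypothesis p_gt1 : (1 < p)%N.

Lemma coef_lin_poly (h : {poly R}) i : (lin_poly p h)`_(p ^ i) = h`_i.
Proof.
rewrite /lin_poly coef_sum.
under eq_bigr => j _ do rewrite coefZ coefXn eqn_exp2l //.
have [lt_i_h|le_h_i] := ltnP i (size h).
  rewrite (bigD1 (Ordinal lt_i_h)) //= eqxx mulr1 big1 ?addr0 // => j ne_j_i.
  by move: ne_j_i; rewrite -val_eqE eq_sym => /negbTE ->; rewrite mulr0.
rewrite nth_default // big1 // => j _.
by rewrite (gtn_eqF (leq_trans (ltn_ord j) le_h_i)) mulr0.
Qed.

Lemma lin_poly_inj : injective (@lin_poly p R).
Proof.
by move=> f g eq_fg; apply/polyP => i; rewrite -[f`_i]coef_lin_poly -[g`_i]coef_lin_poly eq_fg.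
Qed.

End LinPoly.

Section LinPolyFp.
Variable p : nat.
Hypothesis p_prime : prime p.

Let charFpX : p \in [pchar {poly 'F_p}].
Proof. by rewrite pchar_poly pchar_Fp. Qed.

Lemma lin_poly_comp (f Q : {poly 'F_p}) : lin_poly p f \Po Q = lin_eval f Q.
Proof.
rewrite /lin_poly linear_sum; apply: eq_bigr => i _.
by rewrite linearZ /= rmorphXn /= comp_polyX /Fp_to -polyC_natr natr_Zp mul_polyC.
Qed.

Lemma lin_polyE (f : {poly 'F_p}) : lin_poly p f = lin_eval f 'X.
Proof. by rewrite -lin_poly_comp comp_polyXr. Qed.

Lemma lin_polyM (f g : {poly 'F_p}) :
  lin_poly p (f * g) = lin_poly p f \Po lin_poly p g.
Proof. by rewrite lin_poly_comp !lin_polyE (lin_eval_mul charFpX). Qed.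

Lemma lin_poly_1_subXn k : lin_poly p (1 - 'X^k : {poly 'F_p}) = 'X - 'X^(p ^ k).
Proof. by rewrite lin_polyE (lin_evalB charFpX) (lin_eval1 charFpX) (lin_evalXn charFpX). Qed.

End LinPolyFp.

Lemma lin_poly_onto (F : closedFieldType) p (h : {poly F}) c :
  (1 < p)%N -> h != 0 -> exists x, (lin_poly p h).[x] = c.
Proof.
move=> p_gt1 h0; set P := lin_poly p h - c%:P; set s := (size h).-1.
have coef_s : P`_(p ^ s) = lead_coef h.
  by rewrite coefB coef_lin_poly // coefC expn_eq0 eqn0Ngt ltnW // subr0.
have size_P : (p ^ s < size P)%N.
  rewrite ltnNge; apply: contra h0 => le_P_s.
  by rewrite -lead_coef_eq0 -coef_s nth_default.
have /closed_rootP[x /rootP] : size P != 1.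
  by rewrite neq_ltn (leq_ltn_trans _ size_P) ?orbT // expn_gt0 ltnW.
by rewrite hornerD hornerN hornerC => /subr0_eq; exists x.
Qed.

Lemma lin_eval_onto p (E : closedFieldType) (u : {poly 'F_p}) y :
  p \in [pchar E] -> u != 0 -> exists x : E, lin_eval u x = y.
Proof.
move=> charE u0; have p_gt1 := prime_gt1 (pcharf_prime charE).
have uE0 : map_poly (Fp_to E) u != 0.
  by rewrite -size_poly_eq0 size_map_poly_id0 ?(Fp_to_eq0 charE) ?lead_coef_eq0 ?size_poly_eq0.
by have [x] := lin_poly_onto y p_gt1 uE0; exists x; rewrite (lin_eval_horner charE).
Qed.

Section FrobeniusFixedPoints.
Variables (R : pzSemiRingType) (p : nat) (z : R).

Lemma expr_expn_fix_dvdn a b : (a %| b)%N -> z ^+ (p ^ a) = z -> z ^+ (p ^ b) = z.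
Proof.
move=> /dvdnP[m ->] za; elim: m => [|m IHm]; first by rewrite mul0n expn0 expr1.
by rewrite mulSn expnD exprM za IHm.
Qed.

Lemma expr_expn_fix_gcdn a b : (0 < a)%N ->
  z ^+ (p ^ a) = z -> z ^+ (p ^ b) = z -> z ^+ (p ^ gcdn a b) = z.
Proof.
move=> a_gt0 za zb; case: (egcdnP b a_gt0) => km kn def_km _.
have := expr_expn_fix_dvdn (dvdn_mull km (dvdnn a)) za.
by rewrite def_km expnD exprM (expr_expn_fix_dvdn (dvdn_mull kn (dvdnn b)) zb).
Qed.

End FrobeniusFixedPoints.

Section GcdMonic.
Variables (F : fieldType) (f g : {poly F}).

Lemma gcd_monic_eqp : gcd_monic f g %= gcdp f g.
Proof.
rewrite /gcd_monic; have [->|g0] := eqVneq (gcdp f g) 0; first by rewrite scaler0 eqpxx.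
by rewrite eqp_scale // invr_eq0 lead_coef_eq0.
Qed.

Lemma dvdp_gcd_monicl : gcd_monic f g %| f.
Proof. by rewrite (eqp_dvdl _ gcd_monic_eqp) dvdp_gcdl. Qed.

Lemma dvdp_gcd_monicr : gcd_monic f g %| g.
Proof. by rewrite (eqp_dvdl _ gcd_monic_eqp) dvdp_gcdr. Qed.

Lemma coprimep_div_gcd_monic : (f != 0) || (g != 0) ->
  coprimep (f %/ gcd_monic f g) (g %/ gcd_monic f g).
Proof.
rewrite (eqp_coprimepl _ (eqp_divr _ gcd_monic_eqp)).
by rewrite (eqp_coprimepr _ (eqp_divr _ gcd_monic_eqp)); apply: coprimep_div_gcd.
Qed.

End GcdMonic.

Lemma tpolyM (F : nzRingType) d k : (d %| k)%N -> tpoly F d k * ('X^d - 1) = 'X^k - 1.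
Proof.
move=> /dvdnP[m ->]; rewrite /tpoly; have [->|d_gt0] := posnP d.
  by rewrite muln0 divn0 big_ord0 mul0r expr0 subrr.
rewrite mulnK // mulnC; elim: m => [|m IHm]; first by rewrite big_ord0 mul0r muln0 expr0 subrr.
by rewrite big_ord_recr /= mulrDl IHm mulrBr mulr1 -exprD mulnSr addrC addrA subrK.
Qed.

Section Cofactor.
Variables (F : fieldType) (l l' : {poly F}) (d k : nat).
Hypotheses (d_dvd_k : (d %| k)%N) (k_gt0 : (0 < k)%N) (mul_ll' : l * l' = 1 - 'X^k).
Local Notation w := (gcd_monic l' (tpoly F d k)).
Local Notation u := (l' %/ w).
Local Notation t' := (tpoly F d k %/ w).

Let l'_neq0 : l' != 0.
Proof.
apply/eqP => l'0; have := congr1 (coefp 0) mul_ll'.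
rewrite l'0 mulr0 /= coef0 coefB coef1 coefXn eqxx (ltn_eqF k_gt0) subr0.
by move/esym/eqP; rewrite oner_eq0.
Qed.

Let w_neq0 : w != 0.
Proof. by apply: contraNneq l'_neq0 => w0; rewrite -dvd0p -w0 dvdp_gcd_monicl. Qed.

Let divpK_u : u * w = l'.
Proof. exact/divpK/dvdp_gcd_monicl. Qed.

Let mul_cofactor : l * u = - (t' * ('X^d - 1)).
Proof.
apply: (mulIf w_neq0); rewrite -mulrA divpK_u mul_ll' mulNr mulrAC.
by rewrite divpK ?dvdp_gcd_monicr // tpolyM // opprB.
Qed.

Lemma cofactor_neq0 : u != 0.
Proof. by apply: contraNneq l'_neq0 => u0; rewrite -divpK_u u0 mul0r. Qed.

Lemma Xn_sub1_dvdp_mul_cofactor : 'X^d - 1 %| l * u.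
Proof. by apply/dvdpP; exists (- t'); rewrite mul_cofactor mulNr. Qed.

Lemma Xn_sub1_eq_mul_cofactor : exists a b, 'X^d - 1 = (a * ('X^d - 1) - b * l) * u.
Proof.
have /Bezout_eq1_coprimepP[[a b] /= Bab] : coprimep u t'.
  by apply: coprimep_div_gcd_monic; rewrite l'_neq0.
exists a, b; rewrite -[LHS]mul1r -{1}Bab mulrBl -(mulrA b) mul_cofactor.
by rewrite mulrN opprK mulrDl mulrAC mulrA.
Qed.

End Cofactor.

Theorem lemma2 (p n k : nat) (E : closedFieldType) (l l' : {poly 'F_p}) :
  prime p -> (0 < n)%N -> (0 < k)%N -> p \in [pchar E] ->
  separable_poly (lin_poly p l) ->
  'X - 'X^(p ^ k) = lin_poly p l \Po lin_poly p l' ->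
  let d := gcdn n k in
  let w := gcd_monic l' (tpoly _ d k) in
  let u := l' %/ w in
  forall y : E,
    (@lin_eval p E l y = 0 /\ y ^+ (p ^ n) = y) <->
    (exists2 x : E, x ^+ (p ^ d) = x & y = @lin_eval p E u x).
Proof.
move=> p_prime n_gt0 k_gt0 charE _ comp_L d w u y.
have mul_ll' : l * l' = 1 - 'X^k.
  by apply: (lin_poly_inj (prime_gt1 p_prime)); rewrite lin_polyM // lin_poly_1_subXn // comp_L.
have [d_dvd_n d_dvd_k] : (d %| n)%N /\ (d %| k)%N by rewrite dvdn_gcdl dvdn_gcdr.
split.
- case=> Ly yn.
  have yk : y ^+ (p ^ k) = y by apply: (lin_eval_root_fix charE (f := l') _ Ly); rewrite mulrC.
  have yd : y ^+ (p ^ d) = y by apply: expr_expn_fix_gcdn.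
  have [x Ux] := lin_eval_onto y charE (cofactor_neq0 d k_gt0 mul_ll').
  exists x; last by rewrite Ux.
  have [a [b Xd_eq]] := Xn_sub1_eq_mul_cofactor d_dvd_k k_gt0 mul_ll'.
  apply/eqP; rewrite -subr_eq0 -(lin_eval_Xn_sub1 charE) Xd_eq (lin_eval_mul charE) Ux.
  rewrite (lin_evalB charE) !(lin_eval_mul charE) (lin_eval_Xn_sub1 charE) yd subrr Ly.
  by rewrite !(lin_evalx0 charE) subrr.
- case=> x x_fix ->; split.
  + rewrite -(lin_eval_mul charE) (lin_eval_dvdp_Xn_sub1 charE _ x_fix) //.
    exact: Xn_sub1_dvdp_mul_cofactor.
  + by rewrite -(lin_eval_frob charE) (expr_expn_fix_dvdn d_dvd_n x_fix).
Qed.
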